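(* Let $P(Y)\in R[Y]$ be an $m$-triangular polynomial of degree $d$ and $Q(Y)\in R[Y]$ an $n$-triangular polynomial of degree $e$. Then: (1) if $d=e$ and $m=n$, then $P(Y)+Q(Y)$ is $m$-triangular; (2) $P(Y)Q(Y)$ is $(m+n)$-triangular.
   Context: Fix a positive integer $a$ and variables $u_0,\ldots,u_a$. Let $R=\mathbb{C}[u_0,\ldots,u_{a-1}][u_a,u_a^{-1}]$. $\mathbb{Q}_+$ denotes the positive rational numbers. For an integer $m\ge1$, a polynomial $P(Y)=\sum_{l=0}^dp_lY^l\in R[Y]$ of degree $d\ge a$ is called $m$-triangular if for every $l$ with $d-a\le l\le d$ one has $p_l=q_lu_a^{m-1}u_{a-d+l}+P_l(u_{a-d+l+1},\ldots,u_a)$ for some $q_l\in\mathbb{Q}_+$ and some polynomial $P_l\in\mathbb{C}[u_{a-d+l+1},\ldots,u_a]$ (for $l=d$ this means $p_d=q_du_a^m$). *)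

From mathcomp Require Import all_boot all_algebra fraction.
From mathcomp Require Import complex Rstruct.
From mathcomp Require Import mpoly.
Import GRing.Theory.
Local Open Scope ring_scope.

Definition CC : fieldType := complex Rdefinitions.R.

(* Polynomials C[u_0,...,u_a]; the variable u_i is 'X_i with i : 'I_a.+1. *)
Definition Pol (a : nat) := {mpoly CC[a.+1]}.

(* Ambient field: rational functions in u_0,...,u_a.  The ring
   R = C[u_0,...,u_{a-1}][u_a, u_a^{-1}] is the subring of elements p / u_a^k. *)
Definition Frac (a : nat) := {fraction Pol a}.

Definition toF {a : nat} (p : Pol a) : Frac a := @FracField.tofrac (Pol a) p.
Local Notation "x %:F" := (toF x).

Definition u (a : nat) (i : nat) : Pol a := 'X_(inord i : 'I_a.+1).

Definition inR (a : nat) (x : Frac a) : Prop :=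
  exists (p : Pol a) (k : nat), x = p%:F / ((u a a) ^+ k)%:F.

Definition only_vars_above {a : nat} (j : nat) (p : Pol a) : Prop :=
  forall mon, mon \in msupp p -> forall i : 'I_a.+1, (i <= j)%N -> mon i = 0%N.

Definition triangular (a m d : nat) (P : {poly Frac a}) : Prop :=
  [/\ size P = d.+1, (a <= d)%N,
      (forall l, inR a (P`_l)) &
      forall l : nat, (d - a <= l <= d)%N ->
        exists q : rat, 0 < q /\
        exists Pl : Pol a,
          only_vars_above (a + l - d) Pl /\ (l = d -> Pl = 0) /\
          P`_l = ratr q * ((u a a) ^+ (m - 1) * u a (a + l - d))%:F + Pl%:F].

(* The coefficient of
   degree d + e - k (0 < k <= a) of P Q is a convolution whose two extreme terms
   p_d q_(e-k) and p_(d-k) q_e are each a positive rational multiple of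
   u_a^(m+n-1) u_(a-k) plus a polynomial in u_(a-k+1), ..., u_a, while every
   other term multiplies two coefficients lying strictly inside the windows,
   which are already polynomials in u_(a-k+1), ..., u_a.  Sums are handled
   coefficientwise, the positive rational constants adding up. *)

From HB Require Import structures.
From mathcomp Require Import all_boot all_order all_algebra.
From mathcomp Require Import complex Rstruct mpoly fraction zify ring.
Import Order.TTheory GRing.Theory Num.Theory.
Local Open Scope ring_scope.

HB.instance Definition _ (a : nat) :=
  GRing.RMorphism.copy (@toF a) (@tofrac (Pol a)).

Lemma coefM_window (R : nzRingType) (p q : {poly R}) d e k :
    size p = d.+1 -> size q = e.+1 -> (0 < k <= minn d e)%N ->
  (p * q)`_(d + e - k) =
    p`_(d - k) * q`_e + \sum_((d - k).+1 <= j < d) p`_j * q`_(d + e - k - j)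
    + p`_d * q`_(e - k).
Proof.
move=> sp sq /andP[k_gt0 +]; rewrite leq_min => /andP[kd ke].
rewrite coefM -(big_mkord xpredT (fun j => p`_j * q`_(d + e - k - j))).
rewrite (big_cat_nat _ (n := d.+1)) //=; last by lia.
rewrite [\sum_(d.+1 <= j < _) _]big_nat_cond.
rewrite [\sum_(d.+1 <= j < _ | _) _]big1 ?addr0; last first.
  by move=> j /andP[/andP[dj _] _]; rewrite nth_default ?mul0r ?sp.
rewrite (big_cat_nat _ (n := d - k)) //=; last by lia.
rewrite [\sum_(0 <= j < d - k) _]big_nat_cond.
rewrite [\sum_(0 <= j < d - k | _) _]big1 ?add0r; last first.
  move=> j /andP[/andP[_ jdk] _].
  by rewrite [q`_ _]nth_default ?mulr0 ?sq //; lia.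
rewrite big_ltn; last by lia.
rewrite big_nat_recr /=; last by lia.
have -> : (d + e - k - (d - k) = e)%N by lia.
have -> : (d + e - k - d = e - k)%N by lia.
by rewrite addrA.
Qed.

Section Triangular.
Variable a : nat.
Local Notation Fa := (Frac a).
Local Notation "x %:F" := (toF x).
Local Notation ua := (u a a).

Lemma u_neq0 i : u a i != 0.
Proof.
apply/eqP => u0.
have : msupp (u a i) = [:: U_(inord i : 'I_a.+1)%MM] by exact: msuppX.
by rewrite u0 -mpolyC0 msupp0.
Qed.

Lemma toF_ratr (q : rat) : (ratr q)%:MP%:F = ratr q :> Fa.
Proof. exact: (fmorph_rat (toF \o @mpolyC a.+1 CC)). Qed.

(* [ratr] is a ring morphism only into number fields ([CC] is declared as a
   mere field, hence the explicit [complex R]), so its morphism properties in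
   [Fa] are transported along [CC -> Pol a -> Fa]. *)
Lemma ratrD_Frac q r : ratr (q + r) = ratr q + ratr r :> Fa.
Proof. by rewrite -!toF_ratr -rmorphD -mpolyCD rmorphD. Qed.

Lemma ratrM_Frac q r : ratr (q * r) = ratr q * ratr r :> Fa.
Proof.
rewrite -!toF_ratr -rmorphM -mpolyCM.
by rewrite (rmorphM (@ratr (complex Rdefinitions.R))).
Qed.

Lemma ratr_Frac_neq0 q : q != 0 -> ratr q != 0 :> Fa.
Proof.
move=> q0; rewrite -toF_ratr tofrac_eq0 mpolyC_eq0.
by rewrite (fmorph_eq0 (@ratr (complex Rdefinitions.R))).
Qed.

Lemma inRD x y : inR a x -> inR a y -> inR a (x + y).
Proof.
move=> [p [k ->]] [p' [k' ->]].
exists (p * ua ^+ k' + p' * ua ^+ k), (k + k')%N.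
have ua_neq0 : ua%:F != 0 by rewrite tofrac_eq0 u_neq0.
by rewrite !rmorphXn addf_div ?expf_neq0 // rmorphD !rmorphM !rmorphXn exprD.
Qed.

Lemma inRM x y : inR a x -> inR a y -> inR a (x * y).
Proof.
move=> [p [k ->]] [p' [k' ->]]; exists (p * p'), (k + k')%N.
by rewrite mulf_div !rmorphM !rmorphXn exprD.
Qed.

Lemma inR_sum (I : Type) (r : seq I) (F : I -> Fa) :
  (forall i, inR a (F i)) -> inR a (\sum_(i <- r) F i).
Proof.
move=> RF; apply: big_ind => // ; last exact: inRD.
by exists 0, 0%N; rewrite rmorph0 mul0r.
Qed.

Definition above_vars (j : nat) (x : Fa) :=
  exists2 p : Pol a, only_vars_above j p & x = p%:F.

Lemma only_vars_above0 j : only_vars_above j (0 : Pol a).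
Proof. by move=> mon; rewrite -mpolyC0 msupp0. Qed.

Lemma above_vars0 j : above_vars j 0.
Proof. by exists 0; [apply: only_vars_above0 | rewrite rmorph0]. Qed.

Lemma above_varsD j x y :
  above_vars j x -> above_vars j y -> above_vars j (x + y).
Proof.
move=> [p hp ->] [p' hp' ->]; exists (p + p'); last by rewrite rmorphD.
by move=> mon /msuppD_le; rewrite mem_cat => /orP[]; [apply: hp | apply: hp'].
Qed.

Lemma above_varsM j x y :
  above_vars j x -> above_vars j y -> above_vars j (x * y).
Proof.
move=> [p hp ->] [p' hp' ->]; exists (p * p'); last by rewrite rmorphM.
move=> mon /msuppM_le /allpairsP[[m1 m2] [/= m1p m2p ->]] i ij.
by rewrite mnmDE (hp _ m1p _ ij) (hp' _ m2p _ ij).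
Qed.

Lemma above_vars_sum j (I : Type) (r : seq I) (P : pred I) (F : I -> Fa) :
  (forall i, P i -> above_vars j (F i)) ->
  above_vars j (\sum_(i <- r | P i) F i).
Proof.
by move=> AF; apply: big_ind => //; [apply: above_vars0 | apply: above_varsD].
Qed.

Lemma above_varsC j (c : CC) : above_vars j c%:MP%:F.
Proof.
exists c%:MP => // mon; rewrite msuppC; case: eqP => // _.
by rewrite mem_seq1 => /eqP -> i _; exact: mnm0E.
Qed.

Lemma above_vars_ratr j q : above_vars j (ratr q).
Proof. by rewrite -toF_ratr; apply: above_varsC. Qed.

Lemma above_vars_u j i : (j < i <= a)%N -> above_vars j (u a i)%:F.
Proof.
move=> ji; exists (u a i) => // mon.
rewrite /u msuppX mem_seq1 => /eqP -> i' i'j.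
rewrite mnm1E; case: eqP => // /(congr1 val); rewrite /= inordK; lia.
Qed.

Lemma above_varsX j x k : above_vars j x -> above_vars j (x ^+ k).
Proof.
move=> Ax; elim: k => [|k IHk]; last by rewrite exprS; apply: above_varsM.
by rewrite expr0 -(rmorph1 toF) -mpolyC1; apply: above_varsC.
Qed.

Lemma above_varsW j j' x : (j' <= j)%N -> above_vars j x -> above_vars j' x.
Proof.
move=> j'j [p hp ->]; exists p => // mon /hp hmon i ij'.
exact/hmon/(leq_trans ij').
Qed.

(* The triangularity conditions on the coefficients of degree [d] and
   [d - k], [0 < k <= a], of a polynomial of degree [d], reindexed by [k]. *)
Definition tri_lead (m : nat) (x : Fa) :=
  exists2 q : rat, 0 < q & x = ratr q * (ua ^+ m)%:F.

Definition tri_coef (m j : nat) (x : Fa) :=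
  exists2 q : rat, 0 < q &
    above_vars j (x - ratr q * (ua ^+ (m - 1) * u a j)%:F).

Lemma tri_lead_neq0 {m : nat} {x : Fa} : tri_lead m x -> x != 0.
Proof.
move=> [q q_gt0 ->]; rewrite mulf_neq0 ?ratr_Frac_neq0 ?gt_eqF //.
by rewrite rmorphXn expf_neq0 // tofrac_eq0 u_neq0.
Qed.

Lemma tri_leadD m x y : tri_lead m x -> tri_lead m y -> tri_lead m (x + y).
Proof.
move=> [q q_gt0 ->] [r r_gt0 ->]; exists (q + r); first exact: addr_gt0.
by rewrite ratrD_Frac mulrDl.
Qed.

Lemma tri_leadM m n x y :
  tri_lead m x -> tri_lead n y -> tri_lead (m + n) (x * y).
Proof.
move=> [q q_gt0 ->] [r r_gt0 ->]; exists (q * r); first exact: mulr_gt0.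
by rewrite exprD rmorphM ratrM_Frac; ring.
Qed.

Lemma tri_coefD m j x y :
  tri_coef m j x -> tri_coef m j y -> tri_coef m j (x + y).
Proof.
move=> [q q_gt0 Ax] [r r_gt0 Ay]; exists (q + r); first exact: addr_gt0.
set V := (_ * _)%:F in Ax Ay *.
rewrite ratrD_Frac (_ : _ - _ = (x - ratr q * V) + (y - ratr r * V)).
  exact: above_varsD.
by ring.
Qed.

Lemma tri_coef_addr m j x y :
  above_vars j y -> tri_coef m j x -> tri_coef m j (x + y).
Proof.
move=> Ay [q q_gt0 Ax]; exists q => //.
by rewrite addrAC; apply: above_varsD.
Qed.

(* This is where [j < a] enters: the extra factor [u_a^m] is then a polynomial
   in the variables above [u_j]. *)
Lemma tri_lead_coefM m n j x y : (j < a)%N -> (0 < n)%N ->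
  tri_lead m x -> tri_coef n j y -> tri_coef (m + n) j (x * y).
Proof.
move=> ja n_gt0 [q q_gt0 ->] [r r_gt0 Ay].
exists (q * r); first exact: mulr_gt0.
have Aq : above_vars j (ratr q * (ua ^+ m)%:F).
  apply: above_varsM; first exact: above_vars_ratr.
  by rewrite rmorphXn; apply/above_varsX/above_vars_u; lia.
set V := (_ * _)%:F in Ay.
have -> : (m + n - 1 = m + (n - 1))%N by lia.
rewrite (_ : _ - _ = ratr q * (ua ^+ m)%:F * (y - ratr r * V)).
  exact: above_varsM.
by rewrite /V ratrM_Frac !rmorphM !rmorphXn exprD; ring.
Qed.

Lemma tri_coef_above_vars m j j' x : (j' < j <= a)%N ->
  tri_coef m j x -> above_vars j' x.
Proof.
move=> j'j [q _ Ax].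
set V := (_ * _)%:F in Ax; rewrite -(subrK (ratr q * V) x).
apply: above_varsD; first by apply: above_varsW Ax; lia.
apply: above_varsM; first exact: above_vars_ratr.
rewrite /V rmorphM rmorphXn.
apply: above_varsM; last by apply: above_vars_u; lia.
by apply/above_varsX/above_vars_u; lia.
Qed.

Lemma triangularP {m d : nat} {p : {poly Fa}} : (0 < m)%N ->
  triangular a m d p <->
  [/\ size p = d.+1, (a <= d)%N, forall l, inR a p`_l, tri_lead m p`_d
    & forall k, (0 < k <= a)%N -> tri_coef m (a - k) p`_(d - k)].
Proof.
move=> m_gt0.
have uaX : ua ^+ (m - 1) * ua = ua ^+ m by rewrite -exprSr subn1 prednK.
split=> [[sp ad Rp Tp] | [sp ad Rp [q q_gt0 Lp] Tp]]; split=> //.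
- have [q [q_gt0 [pl [_ [pl0 ->]]]]] := Tp d ltac:(lia).
  by exists q => //; rewrite pl0 // rmorph0 addr0 addnK uaX.
- move=> k k_le_a.
  have [q [q_gt0 [pl [+ [_ ->]]]]] := Tp (d - k)%N ltac:(lia).
  have -> : (a + (d - k) - d = a - k)%N by lia.
  by move=> Apl; exists q => //; rewrite addrAC subrr add0r; exists pl.
- move=> l l_win; have [-> | l_neq_d] := eqVneq l d.
    exists q; split=> //; exists 0; split; first exact: only_vars_above0.
    by rewrite rmorph0 addr0 addnK uaX.
  have [q' q'_gt0] := Tp (d - l)%N ltac:(lia).
  have -> : (a - (d - l) = a + l - d)%N by lia.
  rewrite subKn; last by lia.
  move=> [pl Apl Epl]; exists q'; split=> //; exists pl; split=> //.
  by split=> [/eqP | ]; [rewrite (negPf l_neq_d) | rewrite -Epl addrC subrK].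
Qed.

Lemma tri_coef_window_above {m d : nat} {p : {poly Fa}} k j :
    (forall k, (0 < k <= a)%N -> tri_coef m (a - k) p`_(d - k)) ->
    (k <= a <= d)%N -> (d - k < j < d)%N ->
  above_vars (a - k) p`_j.
Proof.
move=> Tp kad kjd; have -> : j = (d - (d - j))%N by lia.
by apply: (@tri_coef_above_vars m (a - (d - j))); [lia | apply: Tp; lia].
Qed.

Lemma triangularD m d (p q : {poly Fa}) : (0 < m)%N ->
  triangular a m d p -> triangular a m d q -> triangular a m d (p + q).
Proof.
move=> m_gt0 /(triangularP m_gt0)[sp ad Rp Lp Tp].
move=> /(triangularP m_gt0)[sq _ Rq Lq Tq]; apply/triangularP => //.
have Lpq : tri_lead m (p + q)`_d by rewrite coefD; apply: tri_leadD.
split=> //.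
- apply/eqP; rewrite eqn_leq (leq_trans (size_polyD _ _)) ?sp ?sq ?maxnn //=.
  rewrite ltnNge; apply/negP => /leq_sizeP/(_ d (leqnn d)) pqd0.
  by have := tri_lead_neq0 Lpq; rewrite pqd0 eqxx.
- by move=> l; rewrite coefD; apply: inRD.
- by move=> k k_le_a; rewrite coefD; apply: tri_coefD; [apply: Tp | apply: Tq].
Qed.

Lemma triangularM m n d e (p q : {poly Fa}) : (0 < m)%N -> (0 < n)%N ->
  triangular a m d p -> triangular a n e q ->
  triangular a (m + n) (d + e) (p * q).
Proof.
move=> m_gt0 n_gt0 /(triangularP m_gt0)[sp ad Rp Lp Tp].
move=> /(triangularP n_gt0)[sq ae Rq Lq Tq].
apply/triangularP; first by rewrite addn_gt0 m_gt0.
split.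
- by rewrite size_mul -?size_poly_gt0 ?sp ?sq // addSn addnS.
- exact: leq_trans ad (leq_addr _ _).
- by move=> l; rewrite coefM; apply: inR_sum => i; apply: inRM.
- have -> : (d + e = (size p + size q).-2)%N by rewrite sp sq addnS.
  rewrite -mul_lead_coef !lead_coefE sp sq; exact: tri_leadM.
move=> k k_win; rewrite coefM_window ?sp ?sq //; last by rewrite leq_min; lia.
rewrite addrAC big_nat_cond; apply: tri_coef_addr.
  apply: above_vars_sum => j /andP[/andP[dkj jd] _]; apply: above_varsM.
    by apply: (tri_coef_window_above _ _ Tp); lia.
  by apply: (tri_coef_window_above _ _ Tq); lia.
apply: tri_coefD; last by apply: tri_lead_coefM => //; [lia | apply: Tq].
by rewrite mulrC addnC; apply: tri_lead_coefM => //; [lia | apply: Tp].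
Qed.
End Triangular.

Theorem mainTheorem3 (a : nat) (Ha : (0 < a)%N) (m n d e : nat)
    (Hm : (0 < m)%N) (Hn : (0 < n)%N) (P Q : {poly Frac a}) :
  triangular a m d P -> triangular a n e Q ->
  ((d = e /\ m = n) -> triangular a m d (P + Q)) /\
  triangular a (m + n) (d + e) (P * Q).
Proof.
move=> tP tQ; split; last exact: triangularM.
by case=> de mn; rewrite -de -mn in tQ; exact: triangularD.
Qed.
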